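(* Let $\mathcal{H}=(V,\vec H,\bm{w})$ be a finite, loopless, strongly connected, weighted directed hypergraph with $|V|\ge2$, and let $h=(A_h,B_h)\in\vec H$ with $B_h=\{y_1,\dots,y_m\}$. Then for every $\alpha\in[0,1]$, $$\kappa_\alpha(h)\le\frac{1-\alpha}{L(h)}\left(\frac{1}{m}\sum_{j=1}^m C(y_j,\bm{w})+\mathrm{diam}(\mathcal{H})\right),$$ where $C(y_j,\bm w)$ is defined below.
   Context: A weighted directed hypergraph $(V,\vec H,\bm{w})$ has a finite vertex set $V$, a finite set $\vec H$ of hyperedges, each an ordered pair $h=(A_h,B_h)$ of nonempty subsets of $V$, and positive weights $w_h>0$. It is loopless if $A_h\cap B_h=\emptyset$ for all $h$. A directed path from $u$ to $v$ is a sequence of hyperedges $h_1,\dots,h_l$ with $u\in A_{h_1}$, $v\in B_{h_l}$ and $B_{h_j}\cap A_{h_{j+1}}\ne\emptyset$; strongly connected means a directed path exists from $u$ to $v$ for all distinct $u,v$. Quasi-distance: $d(u,v)=\inf_\gamma\sum_{h\in\gamma}w_h$ over directed paths from $u$ to $v$ ($u\neq v$), $d(u,u)=0$; $\mathrm{diam}(\mathcal{H})=\max_{u,v}d(u,v)$. $L(h)=\min_{x\in A_h,y\in B_h}d(x,y)$. $\Gamma^{in}(v)=\{z:\exists h'\text{ with }v\in B_{h'},z\in A_{h'}\}$, $\Gamma^{out}(v)=\{z:\exists h'\text{ with }v\in A_{h'},z\in B_{h'}\}$. For $h$ with $A_h=\{x_1,\dots,x_n\}$, $B_h=\{y_1,\dots,y_m\}$,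 $\alpha\in[0,1]$: $\mu^\alpha_{A_h}=\sum_i\mu^\alpha_{x_i}$ with $\mu^\alpha_{x_i}(x_i)=\alpha/n$, $\mu^\alpha_{x_i}(z)=(1-\alpha)\sum_{h':x_i\in B_{h'},z\in A_{h'}}\frac{1}{n|A_{h'}|}\frac{w_{h'}}{\sum_{h'':x_i\in B_{h''}}w_{h''}}$ for $z\in\Gamma^{in}(x_i)$, $0$ otherwise; $\mu^\alpha_{B_h}=\sum_j\mu^\alpha_{y_j}$ with $\mu^\alpha_{y_j}(y_j)=\alpha/m$, $\mu^\alpha_{y_j}(z)=(1-\alpha)\sum_{h':y_j\in A_{h'},z\in B_{h'}}\frac{1}{m|B_{h'}|}\frac{w_{h'}}{\sum_{h'':y_j\in A_{h''}}w_{h''}}$ for $z\in\Gamma^{out}(y_j)$, $0$ otherwise. $W(\mu,\nu)=\inf_\pi\sum_{u,v}\pi(u,v)d(u,v)$ over couplings $\pi$ with $\sum_v\pi(u,v)=\mu(u)$, $\sum_u\pi(u,v)=\nu(v)$. $\kappa_\alpha(h)=1-W(\mu^\alpha_{A_h},\mu^\alpha_{B_h})/L(h)$. Definition of $C$: let $d(A_h,z)=\min_{x\in A_h}d(x,z)$. For $y\in B_h$ set $\Gamma^-_y=\{z\in\Gamma^{out}(y):d(A_h,z)<d(A_h,y)\}$, $\Gamma^+_y=\{z\in\Gamma^{out}(y):d(A_h,z)>d(A_h,y)\}$; $C_1(y)=d(A_h,y)-\min_{z\in\Gamma^-_y}d(A_h,z)$ (or $0$ if $\Gamma^-_y=\emptyset$),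 $C_2(y)=\min_{z\in\Gamma^+_y}d(A_h,z)-d(A_h,y)$ (or $0$ if $\Gamma^+_y=\emptyset$), and $$C(y,\bm w)=\frac{C_1(y)\sum_{z\in\Gamma^-_y}\sum_{h':y\in A_{h'},z\in B_{h'}}\frac{w_{h'}}{|B_{h'}|}-C_2(y)\sum_{z\in\Gamma^+_y}\sum_{h':y\in A_{h'},z\in B_{h'}}\frac{w_{h'}}{|B_{h'}|}}{\sum_{h':y\in A_{h'}}w_{h'}}.$$ *)

From HB Require Import structures.
From mathcomp Require Import all_boot all_order all_algebra.
From mathcomp Require Import classical_sets reals.
Set Implicit Arguments. Unset Strict Implicit. Unset Printing Implicit Defensive.
Import Order.TTheory GRing.Theory Num.Theory.
Local Open Scope classical_set_scope.
Local Open Scope ring_scope.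

(* A weighted directed hypergraph: vertex set V (a finType), hyperedges indexed
   by a finType E, each hyperedge e being the ordered pair (A e, B e) of sets of
   vertices, with weight w e. *)
Section Hypergraph.
Variables (R : realType) (V E : finType) (A B : E -> {set V}) (w : E -> R).

(* well-formedness: nonempty tails/heads, positive weights, and hyperedges are
   distinct as ordered pairs (H is a set of pairs) *)
Definition hypergraph_wf : Prop :=
  [/\ forall e, A e != finset.set0, forall e, B e != finset.set0, forall e, 0 < w e
    & injective (fun e => (A e, B e))].

Definition loopless : Prop := forall e, A e :&: B e = finset.set0.

Definition linked (h1 h2 : E) : bool := [exists x, (x \in B h1) && (x \in A h2)].

Definition is_dpath (u v : V) (p : seq E) : bool :=
  if p is h :: t then [&& u \in A h, path linked h t & v \in B (last h t)]
  else false.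

Definition strongly_connected : Prop :=
  forall u v : V, u != v -> exists p, is_dpath u v p.

Definition qdist (u v : V) : R :=
  if u == v then 0
  else inf [set r | exists p, is_dpath u v p /\ r = \sum_(h <- p) w h].

Definition diam : R := \big[Num.max/0]_(u : V) \big[Num.max/0]_(v : V) qdist u v.

Definition Lh (h : E) : R :=
  inf [set r | exists x y, [/\ x \in A h, y \in B h & r = qdist x y]].

Definition Gamma_in (v : V) : {set V} :=
  [set z | [exists h', (v \in B h') && (z \in A h')]].
Definition Gamma_out (v : V) : {set V} :=
  [set z | [exists h', (v \in A h') && (z \in B h')]].

Definition mu_in (alpha : R) (n : nat) (x z : V) : R :=
  if z == x then alpha / n%:R
  else if z \in Gamma_in x then
    (1 - alpha) * \sum_(h' | (x \in B h') && (z \in A h'))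
       (1 / (n%:R * #|A h'|%:R)) * (w h' / \sum_(h'' | x \in B h'') w h'')
  else 0.

Definition mu_out (alpha : R) (m : nat) (y z : V) : R :=
  if z == y then alpha / m%:R
  else if z \in Gamma_out y then
    (1 - alpha) * \sum_(h' | (y \in A h') && (z \in B h'))
       (1 / (m%:R * #|B h'|%:R)) * (w h' / \sum_(h'' | y \in A h'') w h'')
  else 0.

Definition mu_A (alpha : R) (h : E) (z : V) : R :=
  \sum_(x in A h) mu_in alpha #|A h| x z.
Definition mu_B (alpha : R) (h : E) (z : V) : R :=
  \sum_(y in B h) mu_out alpha #|B h| y z.

Definition W1 (mu nu : V -> R) : R :=
  inf [set c | exists pi : V -> V -> R,
        [/\ forall u v, 0 <= pi u v,
            forall u, \sum_(v : V) pi u v = mu u,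
            forall v, \sum_(u : V) pi u v = nu v
          & c = \sum_(u : V) \sum_(v : V) pi u v * qdist u v]].

Definition kappa (alpha : R) (h : E) : R :=
  1 - W1 (mu_A alpha h) (mu_B alpha h) / Lh h.

Definition dA (h : E) (z : V) : R :=
  inf [set r | exists x, x \in A h /\ r = qdist x z].

Definition Gminus (h : E) (y : V) : {set V} :=
  [set z in Gamma_out y | dA h z < dA h y].
Definition Gplus (h : E) (y : V) : {set V} :=
  [set z in Gamma_out y | dA h y < dA h z].

Definition C1 (h : E) (y : V) : R :=
  if Gminus h y == finset.set0 then 0
  else dA h y - inf [set r | exists z, z \in Gminus h y /\ r = dA h z].
Definition C2 (h : E) (y : V) : R :=
  if Gplus h y == finset.set0 then 0
  else inf [set r | exists z, z \in Gplus h y /\ r = dA h z] - dA h y.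

Definition Cw (h : E) (y : V) : R :=
  (C1 h y * \sum_(z in Gminus h y) \sum_(h' | (y \in A h') && (z \in B h'))
              w h' / #|B h'|%:R
   - C2 h y * \sum_(z in Gplus h y) \sum_(h' | (y \in A h') && (z \in B h'))
              w h' / #|B h'|%:R)
  / \sum_(h' | y \in A h') w h'.

End Hypergraph.

From mathcomp Require Import all_boot all_order all_algebra.
From mathcomp Require Import boolp classical_sets reals.
From mathcomp Require Import ring lra.
Import Order.TTheory GRing.Theory Num.Theory.
Local Open Scope ring_scope.

(* The distance f := d(A_h, .) to the tail of h is 1-Lipschitz for the
   quasi-distance, so testing any coupling of mu_A and mu_B against f bounds
   W(mu_A, mu_B) below by E_{mu_B} f - E_{mu_A} f (the easy half of
   Kantorovich duality).  The measure mu_A keeps mass alpha on the tail, where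
   f vanishes, and f <= diam everywhere, so E_{mu_A} f <= (1 - alpha) diam.
   On the head f >= L(h); the out-neighbours z of y_j lose at most C_1(y_j)
   when f decreases and gain at least C_2(y_j) when f increases, which gives
   E_{mu_B} f >= L(h) - (1 - alpha) (1/m) sum_j C(y_j, w). *)

Lemma inf_ge0 (R : realType) (S : set R) : (forall x, S x -> 0 <= x) -> 0 <= inf S.
Proof.
move=> S_ge0; have [[x Sx]|S0] := pselect (S !=set0)%classic.
  by apply: lb_le_inf; [exists x | exact: S_ge0].
by rewrite inf_out // => -[].
Qed.

Lemma nonneg_inf_le (R : realType) (S : set R) x :
  (forall y, S y -> 0 <= y) -> S x -> inf S <= x.
Proof. by move=> S_ge0 Sx; apply: (ge_inf _ Sx); exists 0. Qed.

Lemma exists_neq {V : finType} (y : V) : (1 < #|V|)%N -> exists v, v != y.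
Proof.
move=> V_gt1; have [v vy|all_y] := pickP (predC1 y); first by exists v.
suff : (#|V| <= 1)%N by rewrite leqNgt V_gt1.
apply/fintype_le1P => x z.
by have /negbFE/eqP -> := all_y z; have /negbFE/eqP -> := all_y x.
Qed.

Lemma strongly_connected_tail {V E : finType} {A B : E -> {set V}} :
  strongly_connected A B -> (1 < #|V|)%N -> forall y, exists e, y \in A e.
Proof.
move=> Hsc V_gt1 y; have [v] := exists_neq y V_gt1; rewrite eq_sym => yv.
by have [[|e p] // /and3P[yA _ _]] := Hsc y v yv; exists e.
Qed.

Lemma strongly_connected_head {V E : finType} {A B : E -> {set V}} :
  strongly_connected A B -> (1 < #|V|)%N -> forall x, exists e, x \in B e.
Proof.
move=> Hsc V_gt1 x; have [v vx] := exists_neq x V_gt1.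
by have [[|e p] // /and3P[_ _ xB]] := Hsc v x vx; exists (last e p).
Qed.

Section Quasidistance.
Context {R : realType} {V E : finType} {A B : E -> {set V}} {w : E -> R}.
Hypothesis w_gt0 : forall e, 0 < w e.
Local Notation d := (qdist A B w).

Lemma path_weight_ge0 (p : seq E) : 0 <= \sum_(e <- p) w e.
Proof. by apply: sumr_ge0 => e _; apply/ltW. Qed.

Lemma qdistxx u : d u u = 0.
Proof. by rewrite /qdist eqxx. Qed.

Lemma qdist_ge0 u v : 0 <= d u v.
Proof.
rewrite /qdist; case: eqP => // _.
by apply: inf_ge0 => r [p [_ ->]]; apply: path_weight_ge0.
Qed.

Lemma qdist_le_path u v p : is_dpath A B u v p -> d u v <= \sum_(e <- p) w e.
Proof.
move=> uvp; rewrite /qdist; case: eqP => _; first exact: path_weight_ge0.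
apply: nonneg_inf_le; last by exists p.
by move=> r [q [_ ->]]; apply: path_weight_ge0.
Qed.

Lemma is_dpath_cat {u v x p q} :
  is_dpath A B u v p -> is_dpath A B v x q -> is_dpath A B u x (p ++ q).
Proof.
case: p => [|e p] //; case: q => [|e' q] //= /and3P[uA ep vB] /and3P[vA e'q xB].
rewrite uA cat_path ep last_cat /= xB e'q !andbT.
by apply/existsP; exists v; rewrite vB vA.
Qed.

Lemma qdist_le_diam u v : d u v <= diam A B w.
Proof.
exact: le_trans (le_bigmax _ _ v) (le_bigmax _ (fun u => \big[Num.max/0]_v d u v) u).
Qed.

Hypothesis Hsc : strongly_connected A B.

Lemma qdist_ge_path_lb {u v r} :
  u != v -> (forall p, is_dpath A B u v p -> r <= \sum_(e <- p) w e) -> r <= d u v.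
Proof.
move=> uv r_lb; rewrite /qdist (negbTE uv).
apply: lb_le_inf => [|_ [p [uvp ->]]]; last exact: r_lb.
by have [p uvp] := Hsc _ _ uv; exists (\sum_(e <- p) w e); exists p.
Qed.

Lemma qdist_triangle u v x : d u x <= d u v + d v x.
Proof.
have [->|uv] := eqVneq u v; first by rewrite qdistxx add0r.
have [->|vx] := eqVneq v x; first by rewrite qdistxx addr0.
rewrite addrC -lerBlDr; apply: (qdist_ge_path_lb vx) => q vxq.
rewrite lerBlDr addrC -lerBlDr; apply: (qdist_ge_path_lb uv) => p uvp.
by rewrite lerBlDr -big_cat qdist_le_path // (is_dpath_cat uvp).
Qed.

Lemma qdist_ge_min_weight c u v : (forall e, c <= w e) -> u != v -> c <= d u v.
Proof.
move=> c_le uv; apply: (qdist_ge_path_lb uv) => -[|e p] // _.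
by rewrite big_cons (le_trans (c_le e)) // lerDl path_weight_ge0.
Qed.

End Quasidistance.

Lemma W1_ge_mean_gap {R : realType} {V E : finType} {A B : E -> {set V}}
    {w : E -> R} (mu nu f : V -> R) :
  (forall u, 0 <= mu u) -> (forall v, 0 <= nu v) ->
  \sum_u mu u = 1 -> \sum_v nu v = 1 ->
  (forall u v, f v - f u <= qdist A B w u v) ->
  \sum_v nu v * f v - \sum_u mu u * f u <= W1 A B w mu nu.
Proof.
move=> mu_ge0 nu_ge0 mu1 nu1 f_lip.
apply: lb_le_inf => [|_ [pi [pi_ge0 pi_mu pi_nu ->]]].
  exists (\sum_u \sum_v mu u * nu v * qdist A B w u v).
  exists (fun u v => mu u * nu v); split => // [u v|u|v].
  - exact: mulr_ge0.
  - by rewrite -mulr_sumr nu1 mulr1.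
  - by rewrite -mulr_suml mu1 mul1r.
have -> : \sum_v nu v * f v - \sum_u mu u * f u =
          \sum_u \sum_v pi u v * (f v - f u).
  under [RHS]eq_bigr => u _ do
    rewrite (eq_bigr _ (fun v _ => mulrBr _ _ _)) sumrB -mulr_suml pi_mu.
  rewrite sumrB exchange_big /=; congr (_ - _).
  by apply: eq_bigr => v _; rewrite -mulr_suml pi_nu.
by apply: ler_sum => u _; apply: ler_sum => v _; apply: ler_wpM2l.
Qed.

Section TailDistance.
Context {R : realType} {V E : finType} {A B : E -> {set V}} {w : E -> R}.
Hypothesis w_gt0 : forall e, 0 < w e.
Variable h : E.
Hypothesis Ah_neq0 : A h != finset.set0.
Local Notation d := (qdist A B w).
Local Notation f := (dA A B w h).

Lemma dA_ge0 z : 0 <= f z.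
Proof. by apply: inf_ge0 => _ [x [_ ->]]; apply: qdist_ge0. Qed.

Lemma dA_le {x} z : x \in A h -> f z <= d x z.
Proof.
move=> xA; apply: nonneg_inf_le; last by exists x.
by move=> _ [x' [_ ->]]; apply: qdist_ge0.
Qed.

Lemma dA_tail x : x \in A h -> f x = 0.
Proof. by move=> xA; apply/eqP; rewrite eq_le dA_ge0 andbT (le_trans (dA_le x xA)) ?qdistxx. Qed.

Lemma dA_le_diam z : f z <= diam A B w.
Proof.
have /set0Pn[x xA] := Ah_neq0.
exact: le_trans (dA_le z xA) (qdist_le_diam _ _).
Qed.

Hypothesis Hsc : strongly_connected A B.

Lemma dA_lipschitz u v : f v - f u <= d u v.
Proof.
rewrite lerBlDl -lerBlDr; have /set0Pn[x0 x0A] := Ah_neq0.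
apply: lb_le_inf => [|_ [x [xA ->]]]; first by exists (d x0 u); exists x0.
by rewrite lerBlDr (le_trans (dA_le v xA)) // qdist_triangle.
Qed.

Lemma Lh_le_dA y : y \in B h -> Lh A B w h <= f y.
Proof.
move=> yB; have /set0Pn[x0 x0A] := Ah_neq0.
apply: lb_le_inf => [|_ [x [xA ->]]]; first by exists (d x0 y); exists x0.
apply: nonneg_inf_le; last by exists x, y.
by move=> _ [x' [y' [_ _ ->]]]; apply: qdist_ge0.
Qed.

Lemma Lh_gt0 : loopless A B -> B h != finset.set0 -> 0 < Lh A B w h.
Proof.
move=> Hloop /set0Pn[y0 y0B]; have /set0Pn[x0 x0A] := Ah_neq0.
have [e0 _ e0_min] := @arg_minP _ _ E h xpredT w isT.
apply: (lt_le_trans (w_gt0 e0)); apply: lb_le_inf => [|_ [x [y [xA yB ->]]]].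
  by exists (d x0 y0); exists x0, y0.
apply: qdist_ge_min_weight => // [e|]; first exact: e0_min.
by apply/eqP => xy; move/setP/(_ x): (Hloop h); rewrite !inE xA xy yB.
Qed.

End TailDistance.

Definition out_flow {R : realType} {V E : finType} (A B : E -> {set V})
    (w : E -> R) (y z : V) : R :=
  \sum_(e | (y \in A e) && (z \in B e)) w e / #|B e|%:R.

Definition out_weight {R : realType} {V E : finType} (A : E -> {set V})
    (w : E -> R) (y : V) : R :=
  \sum_(e | y \in A e) w e.

Section OutMeasure.
Context {R : realType} {V E : finType} {A B : E -> {set V}} {w : E -> R}.
Hypotheses (w_gt0 : forall e, 0 < w e) (B_neq0 : forall e, B e != finset.set0).
Hypothesis Hloop : loopless A B.
Local Notation flow := (out_flow A B w).
Local Notation weight := (out_weight A w).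

Lemma out_flow_ge0 y z : 0 <= flow y z.
Proof. by apply: sumr_ge0 => e _; rewrite divr_ge0 // ltW. Qed.

Lemma out_weight_ge0 y : 0 <= weight y.
Proof. by apply: sumr_ge0 => e _; rewrite ltW. Qed.

Lemma out_flow_eq0 y z : z \notin Gamma_out A B y -> flow y z = 0.
Proof.
move=> zNout; rewrite /out_flow big_pred0 // => e; apply: contraNF zNout => yzAB.
by rewrite inE; apply/existsP; exists e.
Qed.

Lemma out_flowxx y : flow y y = 0.
Proof.
rewrite /out_flow big_pred0 // => e; apply/negbTE/andP => -[yA yB].
by move/setP/(_ y): (Hloop e); rewrite !inE yA yB.
Qed.

Lemma sum_out_flow y : \sum_z flow y z = weight y.
Proof.
rewrite /out_flow /out_weight.
rewrite (exchange_big_dep (fun e => y \in A e)) /=; last by move=> z e _ /andP[].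
apply: eq_bigr => e yA; rewrite (eq_bigl (mem (B e))) => [|z]; last by rewrite yA.
rewrite sumr_const -(mulr_natr (w e / _)) divfK // pnatr_eq0 -lt0n card_gt0; exact: B_neq0.
Qed.

Lemma out_weight_gt0 {y} : (exists e, y \in A e) -> 0 < weight y.
Proof.
case=> e yA; rewrite /out_weight (bigD1 e) //= ltr_wpDr ?w_gt0 //.
by apply: sumr_ge0 => e' _; rewrite ltW.
Qed.

Lemma mu_outE alpha m y z :
  mu_out A B w alpha m y z =
  (if z == y then alpha / m%:R else 0) + (1 - alpha) / (m%:R * weight y) * flow y z.
Proof.
rewrite /mu_out; case: eqP => [->|_]; first by rewrite out_flowxx mulr0 addr0.
rewrite add0r; case: ifPn => [_|zNout]; last by rewrite out_flow_eq0 ?mulr0.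
rewrite /out_flow mulr_sumr [RHS]mulr_sumr; apply: eq_bigr => e _.
by rewrite /out_weight !invfM; ring.
Qed.

Lemma mean_mu_out alpha m y (f : V -> R) :
  \sum_z mu_out A B w alpha m y z * f z =
  alpha / m%:R * f y + (1 - alpha) / (m%:R * weight y) * \sum_z flow y z * f z.
Proof.
under eq_bigr => z _ do rewrite mu_outE mulrDl -[_ * flow y z * f z]mulrA.
rewrite big_split /= -mulr_sumr; congr (_ + _).
by rewrite (bigD1 y) //= eqxx big1 ?addr0 // => z /negbTE ->; rewrite mul0r.
Qed.

Variables (alpha : R) (m : nat).
Hypotheses (alpha_ge0 : 0 <= alpha) (alpha_le1 : alpha <= 1).

Lemma mu_out_ge0 y z : 0 <= mu_out A B w alpha m y z.
Proof.
rewrite mu_outE addr_ge0 ?mulr_ge0 ?out_flow_ge0 ?subr_ge0 //.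
  by case: eqP => // _; rewrite divr_ge0.
by rewrite invr_ge0 mulr_ge0 ?out_weight_ge0.
Qed.

Lemma sum_mu_out y : (0 < m)%N -> 0 < weight y ->
  \sum_z mu_out A B w alpha m y z = m%:R^-1.
Proof.
move=> m_gt0 Sy_gt0.
have := mean_mu_out alpha m y (fun=> 1).
under eq_bigr do rewrite mulr1; move=> ->.
rewrite -mulr_suml sum_out_flow !mulr1; field.
by rewrite gt_eqF ?ltr0n // gt_eqF.
Qed.

End OutMeasure.

Section HeadMeasure.
Context {R : realType} {V E : finType} {A B : E -> {set V}} {w : E -> R}.
Hypotheses (w_gt0 : forall e, 0 < w e) (B_neq0 : forall e, B e != finset.set0).
Hypothesis Hloop : loopless A B.
Hypothesis tail_everywhere : forall y, exists e, y \in A e.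
Local Notation flow := (out_flow A B w).
Local Notation weight := (out_weight A w).
Variables (alpha : R) (h : E).
Hypotheses (alpha_ge0 : 0 <= alpha) (alpha_le1 : alpha <= 1).
Local Notation m := #|B h|.

Lemma card_head_gt0 : (0 < m)%N.
Proof. by rewrite card_gt0. Qed.

Lemma mu_B_ge0 z : 0 <= mu_B A B w alpha h z.
Proof. by apply: sumr_ge0 => y _; apply: mu_out_ge0. Qed.

Lemma sum_mu_B : \sum_z mu_B A B w alpha h z = 1.
Proof.
rewrite exchange_big /=.
under eq_bigr do rewrite sum_mu_out ?card_head_gt0 ?out_weight_gt0 //.
by rewrite sumr_const -(mulr_natr m%:R^-1) mulVf // pnatr_eq0 -lt0n card_head_gt0.
Qed.

Lemma mean_mu_B (f : V -> R) :
  \sum_z mu_B A B w alpha h z * f z =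
  \sum_(y in B h) \sum_z mu_out A B w alpha m y z * f z.
Proof. by under eq_bigr do rewrite mulr_suml; rewrite exchange_big. Qed.

Lemma mean_mu_B_le (f : V -> R) D :
  (forall z, f z <= D) -> {in B h, forall y, f y = 0} ->
  \sum_z mu_B A B w alpha h z * f z <= (1 - alpha) * D.
Proof.
move=> f_le f_head; rewrite mean_mu_B.
have m_gt0 : (0 : R) < m%:R by rewrite ltr0n card_head_gt0.
have y_le y : y \in B h -> \sum_z mu_out A B w alpha m y z * f z <= (1 - alpha) / m%:R * D.
  move=> yB; have Sy_gt0 := out_weight_gt0 w_gt0 (tail_everywhere y).
  rewrite mean_mu_out // f_head // mulr0 add0r.
  have flow_le : \sum_z flow y z * f z <= weight y * D.
    rewrite -(sum_out_flow B_neq0 y) mulr_suml.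
    by apply: ler_sum => z _; rewrite ler_wpM2l ?out_flow_ge0.
  have -> : (1 - alpha) / m%:R * D = (1 - alpha) / (m%:R * weight y) * (weight y * D).
    by field; rewrite !gt_eqF.
  by rewrite ler_wpM2l // divr_ge0 ?subr_ge0 ?mulr_ge0 ?out_weight_ge0.
apply: le_trans (ler_sum _ y_le) _.
by rewrite sumr_const -(mulr_natr ((1 - alpha) / m%:R * D)) mulrAC divfK ?gt_eqF.
Qed.

End HeadMeasure.

Section HeadLowerBound.
Context {R : realType} {V E : finType} {A B : E -> {set V}} {w : E -> R}.
Hypothesis w_gt0 : forall e, 0 < w e.
Variable h : E.
Local Notation f := (dA A B w h).
Local Notation flow := (out_flow A B w).
Local Notation weight := (out_weight A w).

Definition C_numer (y : V) : R :=
  C1 A B w h y * \sum_(z in Gminus A B w h y) flow y z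
  - C2 A B w h y * \sum_(z in Gplus A B w h y) flow y z.

Lemma CwE y : Cw A B w h y = C_numer y / weight y.
Proof. by []. Qed.

Lemma C1_ge y z : z \in Gminus A B w h y -> f y - f z <= C1 A B w h y.
Proof.
move=> zm; rewrite /C1; case: eqP => [Gm0|_]; first by move: zm; rewrite Gm0 inE.
rewrite lerD2l lerN2; apply: nonneg_inf_le; last by exists z.
by move=> _ [z' [_ ->]]; apply: (dA_ge0 w_gt0).
Qed.

Lemma C2_le y z : z \in Gplus A B w h y -> C2 A B w h y <= f z - f y.
Proof.
move=> zp; rewrite /C2; case: eqP => [Gp0|_]; first by move: zp; rewrite Gp0 inE.
rewrite lerD2r; apply: nonneg_inf_le; last by exists z.
by move=> _ [z' [_ ->]]; apply: (dA_ge0 w_gt0).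
Qed.

Lemma out_flow_level y z : z \notin Gminus A B w h y -> z \notin Gplus A B w h y ->
  flow y z * (f z - f y) = 0.
Proof.
move=> zNm zNp; have [zout|zNout] := boolP (z \in Gamma_out A B y); last first.
  by rewrite out_flow_eq0 ?mul0r.
rewrite inE in zout; move: zNm zNp; rewrite !inE zout /= -!leNgt => fy_le fz_le.
by rewrite [f z](@le_anti _ _ (f z) (f y)) ?fy_le ?fz_le // subrr mulr0.
Qed.

Hypothesis B_neq0 : forall e, B e != finset.set0.

Lemma out_flow_dA_ge y : weight y * f y - C_numer y <= \sum_z flow y z * f z.
Proof.
rewrite addrC -lerBrDr -(sum_out_flow B_neq0 y) mulr_suml -sumrB.
under eq_bigr do rewrite -mulrBr.
pose g z := (if z \in Gplus A B w h y then C2 A B w h y * flow y z else 0)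
          - (if z \in Gminus A B w h y then C1 A B w h y * flow y z else 0).
have -> : - C_numer y = \sum_z g z.
  by rewrite sumrB -!big_mkcond -!mulr_sumr opprB.
apply: ler_sum => z _; rewrite /g.
have flow_ge0 := out_flow_ge0 w_gt0 y z.
case: ifPn => [zp|zNp]; case: ifPn => [zm|zNm].
- by move: zp zm; rewrite !inE => /andP[_ lt1] /andP[_ lt2]; have := lt_trans lt1 lt2; rewrite ltxx.
- by rewrite subr0 mulrC ler_wpM2l // C2_le.
- by rewrite sub0r -mulNr mulrC ler_wpM2l // lerNl opprB C1_ge.
- by rewrite subrr out_flow_level.
Qed.

Hypotheses (Hloop : loopless A B) (Ah_neq0 : A h != finset.set0).
Hypothesis tail_everywhere : forall y, exists e, y \in A e.
Variable alpha : R.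
Hypothesis alpha_le1 : alpha <= 1.
Local Notation m := #|B h|.

Lemma mean_mu_out_dA_ge y :
  (f y - (1 - alpha) * Cw A B w h y) / m%:R <=
  \sum_z mu_out A B w alpha m y z * f z.
Proof.
have m_gt0 : (0 : R) < m%:R by rewrite ltr0n card_head_gt0.
have Sy_gt0 := out_weight_gt0 w_gt0 (tail_everywhere y).
have K_ge0 : 0 <= (1 - alpha) / (m%:R * weight y).
  by rewrite divr_ge0 ?subr_ge0 // mulr_ge0 // ltW.
rewrite mean_mu_out // CwE.
have -> : (f y - (1 - alpha) * (C_numer y / weight y)) / m%:R =
    alpha / m%:R * f y + (1 - alpha) / (m%:R * weight y) * (weight y * f y - C_numer y).
  by field; rewrite !gt_eqF.
by rewrite lerD2l ler_wpM2l // out_flow_dA_ge.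
Qed.

Lemma mean_mu_B_ge :
  Lh A B w h - (1 - alpha) * (m%:R^-1 * \sum_(y in B h) Cw A B w h y) <=
  \sum_z mu_B A B w alpha h z * f z.
Proof.
have m_gt0 : (0 : R) < m%:R by rewrite ltr0n card_head_gt0.
have -> : Lh A B w h - (1 - alpha) * (m%:R^-1 * \sum_(y in B h) Cw A B w h y) =
    \sum_(y in B h) (Lh A B w h - (1 - alpha) * Cw A B w h y) / m%:R.
  rewrite -mulr_suml sumrB sumr_const -mulr_sumr -(mulr_natr (Lh A B w h)).
  by field; rewrite gt_eqF.
rewrite mean_mu_B //; apply: ler_sum => y yB.
apply: le_trans (mean_mu_out_dA_ge y).
by rewrite ler_pM2r ?invr_gt0 // lerD2r; apply: Lh_le_dA.
Qed.

End HeadLowerBound.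

Lemma mu_A_reverse {R : realType} {V E : finType} (A B : E -> {set V}) (w : E -> R) alpha h :
  mu_A A B w alpha h = mu_B B A w alpha h.
Proof. by []. Qed.

Lemma loopless_reverse {V E : finType} {A B : E -> {set V}} :
  loopless A B -> loopless B A.
Proof. by move=> Hloop e; rewrite finset.setIC. Qed.

Theorem mainTheorem6 (R : realType) (V E : finType)
  (A B : E -> {set V}) (w : E -> R)
  (Hwf : hypergraph_wf A B w) (Hloop : loopless A B)
  (Hsc : strongly_connected A B) (HV : (2 <= #|V|)%N)
  (h : E) (alpha : R) (Ha0 : 0 <= alpha) (Ha1 : alpha <= 1) :
  kappa A B w alpha h <=
    (1 - alpha) / Lh A B w h *
      ((#|B h|%:R)^-1 * \sum_(y in B h) Cw A B w h y + diam A B w).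
Proof.
have [A_neq0 B_neq0 w_gt0 _] := Hwf.
have tails := strongly_connected_tail Hsc HV.
have heads := strongly_connected_head Hsc HV.
have Hloop' := loopless_reverse Hloop.
have L_gt0 := Lh_gt0 w_gt0 h (A_neq0 h) Hsc Hloop (B_neq0 h).
have gap : \sum_z mu_B A B w alpha h z * dA A B w h z
         - \sum_z mu_A A B w alpha h z * dA A B w h z
         <= W1 A B w (mu_A A B w alpha h) (mu_B A B w alpha h).
  rewrite mu_A_reverse; apply: W1_ge_mean_gap.
  - exact: mu_B_ge0 w_gt0 Hloop' alpha h Ha0 Ha1.
  - exact: mu_B_ge0 w_gt0 Hloop alpha h Ha0 Ha1.
  - exact: sum_mu_B w_gt0 A_neq0 Hloop' heads alpha h.
  - exact: sum_mu_B w_gt0 B_neq0 Hloop tails alpha h.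
  - exact: dA_lipschitz w_gt0 h (A_neq0 h) Hsc.
have head_mean := mean_mu_B_ge w_gt0 h B_neq0 Hloop (A_neq0 h) tails alpha Ha1.
have tail_mean : \sum_z mu_A A B w alpha h z * dA A B w h z <= (1 - alpha) * diam A B w.
  rewrite mu_A_reverse; apply: (mean_mu_B_le w_gt0 A_neq0 Hloop' heads alpha h Ha1).
  - exact: dA_le_diam w_gt0 h (A_neq0 h).
  - exact: dA_tail w_gt0 h.
rewrite /kappa; set W := W1 _ _ _ _ _ in gap *; set L := Lh A B w h in L_gt0 head_mean *.
set X := _ * \sum_(y in B h) _ in head_mean *; set D := diam A B w in tail_mean *.
have W_ge : L - W <= (1 - alpha) * (X + D) by lra.
have -> : 1 - W / L = (L - W) / L by field; rewrite gt_eqF.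
by rewrite mulrAC ler_pM2r ?invr_gt0.
Qed.
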